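(* Let $T\in\mathcal M_n$, and let $f,g:[0,\infty)\to[0,\infty)$ be continuous with $f(t)g(t)=t$ for all $t\ge0$. Then \[\|T\|\le\frac12\left(\Big\|\frac{f^2(|T|)+g^2(|T^*|)}{2}+\mathfrak RT\Big\|+\Big\|\frac{f^2(|T|)+g^2(|T^*|)}{2}-\mathfrak RT\Big\|\right).\] In particular, $\|T\|\le\frac14\big(\||T|+|T^*|+2\mathfrak RT\|+\||T|+|T^*|-2\mathfrak RT\|\big)$.
   Context: $\mathcal M_n$ denotes the algebra of $n\times n$ complex matrices; $\|\cdot\|$ is the operator (spectral) norm. $|X|=(X^*X)^{1/2}$; functions of positive semidefinite matrices are defined by functional calculus. $\mathfrak RT=\frac{T+T^*}{2}$. *)

From HB Require Import structures.
From mathcomp Require Import all_boot all_order all_algebra.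
From mathcomp Require Import complex spectral.
From mathcomp Require Import all_classical all_reals all_analysis.

Set Implicit Arguments.
Unset Strict Implicit.
Unset Printing Implicit Defensive.

Import Order.TTheory GRing.Theory Num.Theory.
Local Open Scope ring_scope.
Local Open Scope classical_set_scope.

Definition adj (R : realType) (n : nat) (T : 'M[R[i]]_n) : 'M[R[i]]_n :=
  (map_mx Num.conj T)^T.

Definition realpart (R : realType) (n : nat) (T : 'M[R[i]]_n) : 'M[R[i]]_n :=
  (2%:R)^-1 *: (T + adj T).

(* Functional calculus of a (normal, here always Hermitian PSD) matrix A via
   the library spectral decomposition A = P^-1 diag(d) P (P unitary):
   f(A) = P^-1 diag(f(d)) P. For Hermitian A the entries of d are real. *)
Definition fcalc (R : realType) (n : nat) (f : R -> R) (A : 'M[R[i]]_n)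
  : 'M[R[i]]_n :=
  invmx (spectralmx A)
  *m diag_mx (map_mx (fun z : R[i] => ((f (complex.Re z))%:C)%C) (spectral_diag A))
  *m spectralmx A.

Definition absm (R : realType) (n : nat) (X : 'M[R[i]]_n) : 'M[R[i]]_n :=
  fcalc (@Num.sqrt R) (adj X *m X).

Definition vnorm (R : realType) (n : nat) (x : 'cV[R[i]]_n) : R :=
  Num.sqrt (\sum_(k < n) ((complex.Re (x k 0)) ^+ 2 + (complex.Im (x k 0)) ^+ 2)).

Definition opnorm (R : realType) (n : nat) (A : 'M[R[i]]_n) : R :=
  sup [set vnorm (A *m x) | x in [set x : 'cV[R[i]]_n | vnorm x = 1]].

From HB Require Import structures.
From mathcomp Require Import all_boot all_order all_algebra.
From mathcomp Require Import complex spectral sesquilinear.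
From mathcomp Require Import all_classical all_reals all_analysis.
From mathcomp Require Import ring lra.
Import Order.TTheory GRing.Theory Num.Theory numFieldNormedType.Exports.
Set Implicit Arguments.
Unset Strict Implicit.
Unset Printing Implicit Defensive.
Local Open Scope ring_scope.
Local Open Scope classical_set_scope.

(* Put A := f^2(|T|) and B := g^2(|T^*|).  Kittaneh's mixed Schwarz inequality
   |<T x, y>|^2 <= <A x, x> <B y, y> says that the block matrix [[A, T^*], [T, B]] is
   positive.  In the eigenbases of T^*T and TT^*, T becomes a matrix S with orthogonal
   columns and rows, whose entry S_ij can only be nonzero when the eigenvalues d_j and
   e_i agree; as f(t) g(t) = t this gives S = diag(g(sqrt e)) C diag(f(sqrt d)) with C
   a contraction, whence the inequality by Cauchy-Schwarz.
   For unit vectors x, y write x = u + v, y = u - v.  The quadratic form of the block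
   matrix at (u, u) and (v, -v) is 2<(M + Re T) u, u> and 2<(M - Re T) v, v>, with
   M = (A + B)/2, while positivity at (s u - t v, s u + t v), with weights
   s ~ ||M - Re T|| and t ~ ||M + Re T||, bounds Re <T x, y> by the average of the two
   norms.  The second inequality is the case f = g = sqrt. *)

Lemma conjC_real (R : realType) (r : R) : Num.conj (r%:C)%C = (r%:C)%C.
Proof. exact: conjc_real. Qed.

Lemma ReD (R : realType) (a b : R[i]) :
  complex.Re (a + b) = complex.Re a + complex.Re b.
Proof. by case: a; case: b. Qed.

Lemma ReN (R : realType) (a : R[i]) : complex.Re (- a) = - complex.Re a.
Proof. by case: a. Qed.

Lemma ReJ (R : realType) (a : R[i]) : complex.Re (Num.conj a) = complex.Re a.
Proof. by case: a. Qed.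

Lemma Re_realM (R : realType) (r : R) (z : R[i]) :
  complex.Re ((r%:C)%C * z) = r * complex.Re z.
Proof. by case: z => a b /=; rewrite mul0r subr0. Qed.

Lemma ge0_complex_real (R : realType) (a : R[i]) :
  0 <= a -> a = ((complex.Re a)%:C)%C /\ 0 <= complex.Re a.
Proof. by case: a => x y; rewrite [0 <= _]/Order.le /= => /andP[/eqP-> ->]. Qed.

Lemma amgm_add_ge0 (R : realFieldType) (a b X Y : R) :
  0 <= a -> 0 <= b -> X ^+ 2 + Y ^+ 2 <= a * b -> 0 <= a + b + (X + X).
Proof. by move=> a0 b0 h; have := sqr_ge0 (a - b); have := sqr_ge0 Y; nra. Qed.

Lemma weighted_bound (R : realFieldType) (al be e a b P Q F r : R) :
  0 <= al -> 0 <= be -> 0 < e -> 0 <= a -> 0 <= b -> a + b = 1 ->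
  P <= al * a -> Q <= be * b -> 0 <= F ->
  0 <= (be + e) * ((be + e) + (al + e)) * P + (al + e) * ((be + e) + (al + e)) * Q
       - (be + e) * (al + e) * (F + (r + r + (r + r))) ->
  r <= (al + be) / 4%:R + e.
Proof.
move=> al0 be0 e0 a0 b0 ab1 Pa Qb F0.
set s := be + e; set t := al + e => H.
have s0 : 0 < s by rewrite /s; lra.
have t0 : 0 < t by rewrite /t; lra.
have Ps : s * (s + t) * P <= s * (s + t) * (al * a).
  by rewrite ler_wpM2l // mulr_ge0 //; lra.
have Qt : t * (s + t) * Q <= t * (s + t) * (be * b).
  by rewrite ler_wpM2l // mulr_ge0 //; lra.
(* [s t - s al = s e] and [s t - t be = t e]. *)
have weights : s * (s + t) * (al * a) + t * (s + t) * (be * b) <= s * t * (s + t).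
  rewrite -subr_ge0 -[X in X - _]mulr1 -ab1.
  have -> : s * t * (s + t) * (a + b) - (s * (s + t) * (al * a) + t * (s + t) * (be * b))
      = (s + t) * e * (s * a + t * b) by rewrite /s /t; ring.
  by rewrite !mulr_ge0 ?addr_ge0 ?mulr_ge0 //; lra.
have stF : 0 <= s * t * F by rewrite !mulr_ge0 //; lra.
have : s * t * (r + r + (r + r)) <= s * t * (s + t) by lra.
rewrite ler_pM2l ?mulr_gt0 // /s /t; lra.
Qed.

Section InnerProduct.
Variables (R : realType) (n : nat).
Implicit Types (x y : 'cV[R[i]]_n) (A : 'M[R[i]]_n).

Definition vdot x y : R[i] := \sum_k x k 0 * Num.conj (y k 0).

Definition vnorm2 x : R :=
  \sum_(k < n) ((complex.Re (x k 0)) ^+ 2 + (complex.Im (x k 0)) ^+ 2).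

Lemma vdotvv x : vdot x x = ((vnorm2 x)%:C)%C.
Proof.
rewrite /vdot /vnorm2 rmorph_sum; apply: eq_bigr => k _.
by rewrite -normCK -add_Re2_Im2.
Qed.

Lemma vnorm2_ge0 x : 0 <= vnorm2 x.
Proof. by apply: sumr_ge0 => k _; rewrite addr_ge0 ?sqr_ge0. Qed.

Lemma vdotvv_ge0 x : 0 <= vdot x x.
Proof. by rewrite vdotvv lecR vnorm2_ge0. Qed.

Lemma vnorm_ge0 x : 0 <= vnorm x.
Proof. exact: sqrtr_ge0. Qed.

Lemma vnorm2E x : vnorm2 x = vnorm x ^+ 2.
Proof. by rewrite sqr_sqrtr // vnorm2_ge0. Qed.

Lemma vdotDl x1 x2 y : vdot (x1 + x2) y = vdot x1 y + vdot x2 y.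
Proof. by rewrite /vdot -big_split; apply: eq_bigr => k _; rewrite mxE mulrDl. Qed.

Lemma vdotDr x y1 y2 : vdot x (y1 + y2) = vdot x y1 + vdot x y2.
Proof.
by rewrite /vdot -big_split; apply: eq_bigr => k _; rewrite mxE rmorphD mulrDr.
Qed.

Lemma vdotZl (c : R[i]) x y : vdot (c *: x) y = c * vdot x y.
Proof. by rewrite /vdot mulr_sumr; apply: eq_bigr => k _; rewrite mxE mulrA. Qed.

Lemma vdotZr (c : R[i]) x y : vdot x (c *: y) = Num.conj c * vdot x y.
Proof.
by rewrite /vdot mulr_sumr; apply: eq_bigr => k _; rewrite mxE rmorphM mulrCA.
Qed.

Lemma vdotNl x y : vdot (- x) y = - vdot x y.
Proof. by rewrite -scaleN1r vdotZl mulN1r. Qed.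

Lemma vdotNr x y : vdot x (- y) = - vdot x y.
Proof. by rewrite -scaleN1r vdotZr rmorphN1 mulN1r. Qed.

Lemma vdotC x y : vdot y x = Num.conj (vdot x y).
Proof.
rewrite /vdot rmorph_sum; apply: eq_bigr => k _.
by rewrite rmorphM /= conjCK mulrC.
Qed.

Lemma vdot_adj A x y : vdot (A *m x) y = vdot x (adj A *m y).
Proof.
rewrite /vdot /adj.
under eq_bigr do rewrite mxE big_distrl /=.
rewrite exchange_big /=; apply: eq_bigr => j _.
rewrite mxE rmorph_sum mulr_sumr; apply: eq_bigr => i _.
by rewrite !mxE rmorphM /= conjCK mulrCA mulrA.
Qed.

Lemma vdot_CauchySchwarz x y : `|vdot x y| ^+ 2 <= vdot x x * vdot y y.
Proof.
have dotE u v : vdot u v = dotmx u^T v^T.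
  by rewrite dotmxE mxE /vdot; apply: eq_bigr => k _; rewrite !mxE.
by rewrite !dotE; exact: (CauchySchwarz (@dotmx _ n) x^T y^T).1.
Qed.

Lemma vnorm2Z (r : R) x : vnorm2 ((r%:C)%C *: x) = r ^+ 2 * vnorm2 x.
Proof.
apply: complexI; rewrite -vdotvv vdotZl vdotZr conjC_real vdotvv.
by rewrite rmorphM rmorphXn /= expr2 mulrA.
Qed.

Lemma vnormZ (r : R) x : vnorm ((r%:C)%C *: x) = `|r| * vnorm x.
Proof. by rewrite /vnorm -/(vnorm2 _) vnorm2Z sqrtrM ?sqr_ge0 // sqrtr_sqr. Qed.

End InnerProduct.

Section OperatorNorm.
Variables (R : realType) (n : nat).
Implicit Types (x : 'cV[R[i]]_n) (N : 'M[R[i]]_n).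

Lemma vnorm2_mulmx_bounded N : exists K : R, forall x, vnorm2 (N *m x) <= K * vnorm2 x.
Proof.
pose r i : 'cV[R[i]]_n := \col_j Num.conj (N i j).
exists (\sum_i vnorm2 (r i)) => x.
rewrite -lecR rmorphM /= -!vdotvv rmorph_sum /=.
have -> : vdot (N *m x) (N *m x) = \sum_i `|vdot x (r i)| ^+ 2.
  rewrite /vdot; apply: eq_bigr => i _; rewrite normCK.
  by congr (_ * Num.conj _); rewrite mxE; apply: eq_bigr => j _;
    rewrite !mxE conjCK mulrC.
rewrite mulr_suml; apply: ler_sum => i _.
by rewrite -vdotvv mulrC; exact: vdot_CauchySchwarz.
Qed.

Let unit_image N := [set vnorm (N *m x) | x in [set x | vnorm x = 1]].

Lemma unit_image_ubound N : has_ubound (unit_image N).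
Proof.
have [K HK] := vnorm2_mulmx_bounded N.
exists (Num.sqrt K) => _ [x /= x1 <-].
apply: ler_wsqrtr; rewrite -/(vnorm2 _) -[K]mulr1 -(expr1n _ 2) -x1 -vnorm2E.
exact: HK.
Qed.

Lemma opnorm_ge0 N : 0 <= opnorm N.
Proof.
rewrite /opnorm -/(unit_image N).
have [/eqP->|/set0P [y Sy]] := boolP (unit_image N == set0); first by rewrite sup0.
apply: le_trans (ub_le_sup (unit_image_ubound N) Sy).
by case: Sy => x _ <-; exact: vnorm_ge0.
Qed.

Lemma opnorm_le N (c : R) :
  0 <= c -> (forall x, vnorm x = 1 -> vnorm (N *m x) <= c) -> opnorm N <= c.
Proof.
move=> c0 Nc; rewrite /opnorm -/(unit_image N).
have [/eqP->|ne] := boolP (unit_image N == set0); first by rewrite sup0.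
by apply: ge_sup; [exact/set0P | move=> _ [x /= x1 <-]; exact: Nc].
Qed.

Lemma vnorm_mulmx_le N x : vnorm (N *m x) <= opnorm N * vnorm x.
Proof.
have [K HK] := vnorm2_mulmx_bounded N.
have [x0|xn0] := eqVneq (vnorm x) 0.
  rewrite x0 mulr0 /vnorm -/(vnorm2 _).
  have := HK x; rewrite [vnorm2 x]vnorm2E x0 expr0n mulr0 => Nx0.
  by rewrite (@le_anti _ _ (vnorm2 (N *m x)) 0) ?sqrtr0 // Nx0 vnorm2_ge0.
have s_gt0 : 0 < vnorm x by rewrite lt_def xn0 vnorm_ge0.
have si0 : 0 <= (vnorm x)^-1 by rewrite invr_ge0 ltW.
pose y := (((vnorm x)^-1)%:C)%C *: x.
have y1 : vnorm y = 1 by rewrite vnormZ ger0_norm // mulVf.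
have := ub_le_sup (unit_image_ubound N) (ex_intro2 _ _ y y1 erefl).
rewrite -/(opnorm N) /y -scalemxAr vnormZ (ger0_norm si0).
by rewrite ler_pdivrMl // mulrC.
Qed.

Lemma opnormZ_le (r : R) N : 0 <= r -> opnorm ((r%:C)%C *: N) <= r * opnorm N.
Proof.
move=> r0; apply: opnorm_le => [|x x1]; first by rewrite mulr_ge0 ?opnorm_ge0.
rewrite -scalemxAl vnormZ ger0_norm // ler_wpM2l //.
by rewrite -[X in _ <= X]mulr1 -x1 vnorm_mulmx_le.
Qed.

Lemma opnorm_scale2_le N : opnorm (2%:R *: N) <= 2%:R * opnorm N.
Proof. by rewrite -(rmorph_nat (@real_complex R)) opnormZ_le. Qed.

Lemma Re_vdot_le_opnorm N x : complex.Re (vdot (N *m x) x) <= opnorm N * vnorm2 x.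
Proof.
have := vdot_CauchySchwarz (N *m x) x.
rewrite !vdotvv -rmorphM -add_Re2_Im2 lecR; set z := vdot (N *m x) x => CS.
rewrite vnorm2E !expr2 mulrA; set b := opnorm N * vnorm x * vnorm x.
have b0 : 0 <= b by rewrite !mulr_ge0 ?opnorm_ge0 ?vnorm_ge0.
have : complex.Re z ^+ 2 <= b ^+ 2.
  rewrite -[X in X <= _]addr0; apply: le_trans (lerD (lexx _) (sqr_ge0 (complex.Im z))) _.
  apply: (le_trans CS); rewrite !vnorm2E /b exprMn ler_wpM2r ?sqr_ge0 //.
  by apply: lerXn2r; rewrite ?nnegrE ?mulr_ge0 ?vnorm_ge0 ?opnorm_ge0 ?vnorm_mulmx_le.
by rewrite !expr2 => h; nra.
Qed.

End OperatorNorm.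

Section FunctionalCalculus.
Variables (R : realType) (n : nat).
Implicit Types (A P X : 'M[R[i]]_n) (c : 'rV[R[i]]_n).
Local Open Scope sesquilinear_scope.

Lemma adjE A : adj A = A ^t*.
Proof. by apply/matrixP => i j; rewrite !mxE. Qed.

Lemma adjK A : adj (adj A) = A.
Proof. by rewrite !adjE trmxCK. Qed.

Lemma adjM A P : adj (A *m P) = adj P *m adj A.
Proof.
apply/matrixP => i j; rewrite !mxE rmorph_sum; apply: eq_bigr => k _.
by rewrite !mxE rmorphM mulrC.
Qed.

Lemma adj_diag c : adj (diag_mx c) = diag_mx (map_mx Num.conj c).
Proof.
apply/matrixP => i j; rewrite !mxE eq_sym.
by case: eqP => [->|_]; rewrite ?mulr1n ?mulr0n ?conjC0.
Qed.

Lemma hermitian_normalmx X : adj X = X -> X \is normalmx.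
Proof. by move=> XX; apply/normalmxP; rewrite -adjE XX. Qed.

Lemma adj_mulmx_normalmx A : adj A *m A \is normalmx.
Proof. by apply: hermitian_normalmx; rewrite adjM adjK. Qed.

Lemma unitarymx_mulmx_adj P : P \is unitarymx -> P *m adj P = 1%:M.
Proof. by move=> /unitarymxP; rewrite adjE. Qed.

Lemma unitarymx_adj_mulmx P : P \is unitarymx -> adj P *m P = 1%:M.
Proof.
by move=> uP; rewrite adjE -invmx_unitary // mulVmx // unitarymx_unit.
Qed.

Lemma unitarymx_adj_mulmxK P A : P \is unitarymx -> adj P *m (P *m A) = A.
Proof. by move=> uP; rewrite mulmxA unitarymx_adj_mulmx // mul1mx. Qed.

Lemma unitarymx_mulmx_adjK P A : P \is unitarymx -> P *m (adj P *m A) = A.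
Proof. by move=> uP; rewrite mulmxA unitarymx_mulmx_adj // mul1mx. Qed.

Definition map_re (f : R -> R) c : 'rV[R[i]]_n :=
  map_mx (fun z : R[i] => ((f (complex.Re z))%:C)%C) c.

Lemma map_re_comp (f g : R -> R) c : map_re g (map_re f c) = map_re (g \o f) c.
Proof. by apply/matrixP => i j; rewrite !mxE. Qed.

(* [Q := P2 P1^*] intertwines [diag c1] and [diag c2], i.e. [c1 j = c2 i] whenever
   [Q i j != 0]; hence it also intertwines [diag (h c1)] and [diag (h c2)]. *)
Lemma unitary_diag_map (h : R[i] -> R[i]) P1 P2 c1 c2 :
  P1 \is unitarymx -> P2 \is unitarymx ->
  adj P1 *m diag_mx c1 *m P1 = adj P2 *m diag_mx c2 *m P2 ->
  adj P1 *m diag_mx (map_mx h c1) *m P1 = adj P2 *m diag_mx (map_mx h c2) *m P2.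
Proof.
move=> u1 u2 E.
pose Q := P2 *m adj P1.
have QD : Q *m diag_mx c1 = diag_mx c2 *m Q.
  have := congr1 (fun X => P2 *m X *m adj P1) E.
  rewrite !mulmxA unitarymx_mulmx_adj // mul1mx -!mulmxA.
  by rewrite unitarymx_mulmx_adj // mulmx1 !mulmxA.
have QP1 : Q *m P1 = P2 by rewrite -mulmxA unitarymx_adj_mulmx // mulmx1.
have P2Q : adj P2 *m Q = adj P1 by rewrite unitarymx_adj_mulmxK.
clearbody Q.
have QDh : Q *m diag_mx (map_mx h c1) = diag_mx (map_mx h c2) *m Q.
  apply/matrixP => i j; move/matrixP: QD => /(_ i j).
  rewrite !mul_mx_diag !mul_diag_mx !mxE => Qij.
  have [->|Qn0] := eqVneq (Q i j) 0; first by rewrite mulr0 mul0r.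
  have -> : c1 0 j = c2 0 i by apply: (mulfI Qn0); rewrite Qij mulrC.
  by rewrite mulrC.
by rewrite -{2}QP1 !mulmxA -(mulmxA _ _ Q) -QDh mulmxA P2Q.
Qed.

Lemma spectral_decomposition X : X \is normalmx ->
  X = adj (spectralmx X) *m diag_mx (spectral_diag X) *m spectralmx X.
Proof.
by move=> /orthomx_spectralP XE; rewrite adjE -invmx_unitary ?spectral_unitarymx.
Qed.

Lemma fcalcE (f : R -> R) X :
  fcalc f X = adj (spectralmx X) *m diag_mx (map_re f (spectral_diag X)) *m spectralmx X.
Proof. by rewrite /fcalc (invmx_unitary (spectral_unitarymx X)) -adjE. Qed.

Lemma fcalc_unitary_diag (f : R -> R) X P c :
  P \is unitarymx -> X = adj P *m diag_mx c *m P ->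
  fcalc f X = adj P *m diag_mx (map_re f c) *m P.
Proof.
move=> uP XE.
have nX : X \is normalmx.
  apply/orthomx_spectral_subproof; exists (P, c); first exact: uP.
  by rewrite /= (invmx_unitary uP) -adjE.
rewrite fcalcE; apply: unitary_diag_map; [exact: spectral_unitarymx | exact: uP |].
by rewrite -(spectral_decomposition nX).
Qed.

Lemma fcalc_comp (f g : R -> R) X : fcalc g (fcalc f X) = fcalc (g \o f) X.
Proof.
have E := fcalcE f X.
by rewrite (fcalc_unitary_diag g (spectral_unitarymx X) E) map_re_comp fcalcE.
Qed.

End FunctionalCalculus.

Section DiagonalForms.
Variables (R : realType) (n : nat).
Implicit Types (v : 'rV[R[i]]_n) (x y : 'cV[R[i]]_n).

Lemma vdot_diag v x y :
  vdot (diag_mx v *m x) y = \sum_k v 0 k * (x k 0 * Num.conj (y k 0)).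
Proof. by apply: eq_bigr => k _; rewrite mul_diag_mx mxE mulrA. Qed.

Lemma vdot_diag_ge0 v x : (forall k, 0 <= v 0 k) -> 0 <= vdot (diag_mx v *m x) x.
Proof.
move=> v0; rewrite vdot_diag; apply: sumr_ge0 => k _.
by rewrite mulr_ge0 // -normCK exprn_ge0.
Qed.

Lemma vdot_diag_sqrt v x : (forall k, 0 <= v 0 k) ->
  vdot (diag_mx (map_re (@Num.sqrt R) v) *m x) (diag_mx (map_re (@Num.sqrt R) v) *m x)
  = vdot (diag_mx v *m x) x.
Proof.
move=> v0; rewrite !vdot_diag; apply: eq_bigr => k _.
rewrite mul_diag_mx !mxE rmorphM /= conjC_real.
set r := complex.Re (v 0 k); have [vE r0] := ge0_complex_real (v0 k).
have rr : r = Num.sqrt r * Num.sqrt r by rewrite -expr2 sqr_sqrtr.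
by rewrite [in RHS]vE -/r [in RHS]rr rmorphM /=; ring.
Qed.

End DiagonalForms.

Section MixedSchwarz.
Variables (R : realType) (n : nat) (S : 'M[R[i]]_n) (d e : 'rV[R[i]]_n).
Hypotheses (Sd : adj S *m S = diag_mx d) (Se : S *m adj S = diag_mx e).

Lemma gram_col k : d 0 k = \sum_i `|S i k| ^+ 2.
Proof.
move/matrixP: Sd => /(_ k k); rewrite !mxE eqxx mulr1n => <-.
by apply: eq_bigr => i _; rewrite !mxE normCK mulrC.
Qed.

Lemma gram_row i : e 0 i = \sum_k `|S i k| ^+ 2.
Proof.
move/matrixP: Se => /(_ i i); rewrite !mxE eqxx mulr1n => <-.
by apply: eq_bigr => k _; rewrite !mxE normCK.
Qed.

Lemma gram_col_ge0 k : 0 <= d 0 k.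
Proof. by rewrite gram_col sumr_ge0 // => i _; rewrite exprn_ge0. Qed.

Lemma gram_row_ge0 i : 0 <= e 0 i.
Proof. by rewrite gram_row sumr_ge0 // => k _; rewrite exprn_ge0. Qed.

Lemma vdot_gram w : vdot (S *m w) (S *m w) = \sum_k d 0 k * (w k 0 * Num.conj (w k 0)).
Proof.
rewrite vdot_adj mulmxA Sd vdotC vdot_diag rmorph_sum; apply: eq_bigr => k _.
by rewrite !rmorphM /= conjCK (geC0_conj (gram_col_ge0 k)) [_ * Num.conj _]mulrC.
Qed.

Lemma gram_entry i j : S i j != 0 -> d 0 j = e 0 i /\ 0 < d 0 j.
Proof.
move=> Sn0; split.
  have : S *m diag_mx d = diag_mx e *m S by rewrite -Sd -Se mulmxA.
  move/matrixP => /(_ i j); rewrite mul_mx_diag mul_diag_mx !mxE => Sde.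
  by apply: (mulfI Sn0); rewrite Sde mulrC.
rewrite gram_col (bigD1 i) //= ltr_pwDl ?exprn_gt0 ?normr_gt0 //.
by apply: sumr_ge0 => k _; rewrite exprn_ge0.
Qed.

Let C := S *m diag_mx (map_re (fun t => (Num.sqrt t)^-1) d).

(* The nonzero columns of [C] are orthonormal; [t / sqrt t ^ 2 <= 1] also covers the junk
   value [0^-1 = 0] on the zero columns. *)
Lemma vdot_normalized_le z : vdot (C *m z) (C *m z) <= vdot z z.
Proof.
rewrite -mulmxA vdot_gram; apply: ler_sum => k _.
rewrite mul_diag_mx !mxE.
set t := complex.Re (d 0 k); have [dE t0] := ge0_complex_real (gram_col_ge0 k).
rewrite dE -/t rmorphM /= conjC_real.
have -> : (t%:C)%C * (((Num.sqrt t)^-1)%:C%C * z k 0 * (((Num.sqrt t)^-1)%:C%C * Num.conj (z k 0)))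
    = ((t * ((Num.sqrt t)^-1 * (Num.sqrt t)^-1))%:C)%C * (z k 0 * Num.conj (z k 0)).
  by rewrite !rmorphM /=; ring.
apply: ler_piMl; first by rewrite -normCK exprn_ge0.
rewrite lecR; have [t00|tn0] := eqVneq t 0; first by rewrite t00 mul0r ler01.
by rewrite -invfM -expr2 sqr_sqrtr // mulfV.
Qed.

Variables (phi psi : R -> R).
Hypotheses (phi0 : forall t, 0 <= t -> 0 <= phi t) (psi0 : forall t, 0 <= t -> 0 <= psi t).
Hypothesis phipsi : forall t, 0 <= t -> phi t * psi t = t.

Lemma gram_factor : S = diag_mx (map_re (Num.sqrt \o psi) e) *m C
                        *m diag_mx (map_re (Num.sqrt \o phi) d).
Proof.
apply/matrixP => i j; rewrite mul_mx_diag mul_diag_mx /C mul_mx_diag !mxE /=.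
have [->|Sn0] := eqVneq (S i j) 0; first by rewrite mul0r mulr0 mul0r.
have [-> dpos] := gram_entry Sn0.
have [eE t0] := ge0_complex_real (ltW dpos); set t := complex.Re (e 0 i) in t0 *.
have ht : Num.sqrt (psi t) * (Num.sqrt t)^-1 * Num.sqrt (phi t) = 1.
  rewrite mulrAC -sqrtrM ?psi0 // [psi t * _]mulrC phipsi // mulfV // gt_eqF // sqrtr_gt0.
  by rewrite -ltcR -eE.
transitivity (S i j * ((Num.sqrt (psi t) * (Num.sqrt t)^-1 * Num.sqrt (phi t))%:C)%C);
  first by rewrite ht mulr1.
by rewrite !rmorphM /=; ring.
Qed.

Lemma diag_mixed_schwarz x y :
  `|vdot (S *m x) y| ^+ 2 <=
    vdot (diag_mx (map_re phi d) *m x) x * vdot (diag_mx (map_re psi e) *m y) y.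
Proof.
set a := map_re (Num.sqrt \o phi) d; set b := map_re (Num.sqrt \o psi) e.
have adj_b : adj (diag_mx b) = diag_mx b.
  by rewrite adj_diag; congr diag_mx; apply/matrixP => i j; rewrite !mxE conjC_real.
have -> : vdot (S *m x) y = vdot (C *m (diag_mx a *m x)) (diag_mx b *m y).
  by rewrite {1}gram_factor -!mulmxA vdot_adj adj_b.
rewrite -(vdot_diag_sqrt _ (v := map_re phi d)); last first.
  by move=> k; rewrite mxE lecR phi0 // (ge0_complex_real (gram_col_ge0 k)).2.
rewrite -(vdot_diag_sqrt _ (v := map_re psi e)); last first.
  by move=> k; rewrite mxE lecR psi0 // (ge0_complex_real (gram_row_ge0 k)).2.
rewrite !map_re_comp -/a -/b.
apply: le_trans (vdot_CauchySchwarz _ _) _.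
by apply: ler_wpM2r; [exact: vdotvv_ge0 | exact: vdot_normalized_le].
Qed.

End MixedSchwarz.

Section MixedSchwarzFcalc.
Variables (R : realType) (n : nat).
Implicit Types (T A B : 'M[R[i]]_n) (u v w x y : 'cV[R[i]]_n).

Definition mixed_schwarz T A B : Prop :=
  [/\ forall w, 0 <= vdot (A *m w) w, forall w, 0 <= vdot (B *m w) w &
      forall x y, `|vdot (T *m x) y| ^+ 2 <= vdot (A *m x) x * vdot (B *m y) y].

Lemma fcalc_mixed_schwarz T (phi psi : R -> R) :
  (forall t, 0 <= t -> 0 <= phi t) -> (forall t, 0 <= t -> 0 <= psi t) ->
  (forall t, 0 <= t -> phi t * psi t = t) ->
  mixed_schwarz T (fcalc phi (adj T *m T)) (fcalc psi (T *m adj T)).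
Proof.
move=> phi0 psi0 phipsi.
set P := spectralmx (adj T *m T); set d := spectral_diag (adj T *m T).
set Q := spectralmx (T *m adj T); set e := spectral_diag (T *m adj T).
have uP : P \is unitarymx := spectral_unitarymx _.
have uQ : Q \is unitarymx := spectral_unitarymx _.
have TTE : adj T *m T = adj P *m diag_mx d *m P.
  exact: spectral_decomposition (adj_mulmx_normalmx T).
have TTE' : T *m adj T = adj Q *m diag_mx e *m Q.
  by apply: spectral_decomposition; have := adj_mulmx_normalmx (adj T); rewrite adjK.
pose S := Q *m T *m adj P.
have Sd : adj S *m S = diag_mx d.
  rewrite /S !adjM adjK -!mulmxA unitarymx_adj_mulmxK // (mulmxA (adj T)) TTE.
  by rewrite -!mulmxA unitarymx_mulmx_adjK // unitarymx_mulmx_adj // mulmx1.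
have Se : S *m adj S = diag_mx e.
  rewrite /S !adjM adjK -!mulmxA (mulmxA (adj P)) unitarymx_adj_mulmx // mul1mx.
  by rewrite (mulmxA T) TTE' -!mulmxA unitarymx_mulmx_adjK // unitarymx_mulmx_adj // mulmx1.
have TE : T = adj Q *m S *m P.
  by rewrite /S -!mulmxA unitarymx_adj_mulmxK // unitarymx_adj_mulmx // mulmx1.
have formA w : vdot (fcalc phi (adj T *m T) *m w) w
    = vdot (diag_mx (map_re phi d) *m (P *m w)) (P *m w).
  by rewrite fcalcE -!mulmxA vdot_adj adjK.
have formB w : vdot (fcalc psi (T *m adj T) *m w) w
    = vdot (diag_mx (map_re psi e) *m (Q *m w)) (Q *m w).
  by rewrite fcalcE -!mulmxA vdot_adj adjK.
split=> [w|w|x y]; rewrite ?formA ?formB.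
- by apply: vdot_diag_ge0 => k; rewrite mxE lecR phi0 ?(ge0_complex_real (gram_col_ge0 Sd k)).2.
- by apply: vdot_diag_ge0 => k; rewrite mxE lecR psi0 ?(ge0_complex_real (gram_row_ge0 Se k)).2.
have -> : vdot (T *m x) y = vdot (S *m (P *m x)) (Q *m y).
  by rewrite {1}TE -!mulmxA vdot_adj adjK.
exact: diag_mixed_schwarz.
Qed.

End MixedSchwarzFcalc.

Section BlockForm.
Variables (R : realType) (n : nat) (T A B : 'M[R[i]]_n).
Implicit Types (u v w x y : 'cV[R[i]]_n).

(* The real part of [block_form w1 w2] is the quadratic form of the block matrix
   [[A, T^*], [T, B]] at [(w1, w2)]. *)
Definition block_form w1 w2 :=
  vdot (A *m w1) w1 + vdot (B *m w2) w2 + (vdot (T *m w1) w2 + vdot (T *m w1) w2).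

Lemma block_form_polarization (s t : R) u v :
  (s%:C)%C * ((s%:C)%C + (t%:C)%C) * block_form u u
  + (t%:C)%C * ((s%:C)%C + (t%:C)%C) * block_form v (- v)
  - (s%:C)%C * (t%:C)%C * block_form (u + v) (u - v)
  = block_form ((s%:C)%C *: u - (t%:C)%C *: v) ((s%:C)%C *: u + (t%:C)%C *: v).
Proof.
rewrite /block_form !(mulmxDr, mulmxN) -!scalemxAr.
move: (A *m u) (A *m v) (B *m u) (B *m v) (T *m u) (T *m v) => Au Av Bu Bv Tu Tv.
by rewrite !(vdotDl, vdotDr, vdotNl, vdotNr, vdotZl, vdotZr) !conjC_real; ring.
Qed.

Lemma Re_block_form_diag u : complex.Re (block_form u u)
  = complex.Re (vdot ((A + B + 2%:R *: realpart T) *m u) u).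
Proof.
rewrite /realpart /block_form !mulmxDl -!scalemxAl !mulmxDl !vdotDl !vdotZl !vdotDl.
rewrite [vdot (adj T *m u) u]vdot_adj adjK (vdotC (T *m u) u) mulrA mulfV ?pnatr_eq0 //.
by rewrite mul1r !ReD ReJ.
Qed.

Lemma Re_block_form_antidiag u : complex.Re (block_form u (- u))
  = complex.Re (vdot ((A + B - 2%:R *: realpart T) *m u) u).
Proof.
rewrite /realpart /block_form mulmxBl -!scalemxAl !mulmxDl !mulmxN.
rewrite !(vdotDl, vdotNl, vdotNr, vdotZl) opprK.
rewrite [vdot (adj T *m u) u]vdot_adj adjK (vdotC (T *m u) u) mulrA mulfV ?pnatr_eq0 //.
by rewrite mul1r !(ReD, ReN) ReJ opprD.
Qed.

Hypothesis TAB : mixed_schwarz T A B.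

Lemma Re_block_form_ge0 w1 w2 : 0 <= complex.Re (block_form w1 w2).
Proof.
case: TAB => A0 B0 CS; rewrite /block_form !ReD.
have [Aw a0] := ge0_complex_real (A0 w1); have [Bw b0] := ge0_complex_real (B0 w2).
have := CS w1 w2; rewrite Aw Bw -add_Re2_Im2 -rmorphM lecR.
exact: amgm_add_ge0.
Qed.

Lemma Re_vdot_le_of_block (al be : R) :
  (forall u, complex.Re (block_form u u) <= al * vnorm2 u) ->
  (forall v, complex.Re (block_form v (- v)) <= be * vnorm2 v) ->
  0 <= al -> 0 <= be ->
  forall x y, vnorm2 x = 1 -> vnorm2 y = 1 ->
  complex.Re (vdot (T *m x) y) <= (al + be) / 4%:R.
Proof.
move=> alB beB al0 be0 x y x1 y1; apply/ler_addgt0Pr => e e0.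
pose h : R[i] := ((2 : R)^-1)%:C%C.
have hh : h + h = 1 by rewrite -rmorphD /=; congr (_%:C)%C; lra.
pose u := h *: (x + y); pose v := h *: (x - y).
have uvx : u + v = x by apply/matrixP => i j; rewrite !mxE -[RHS]mul1r -hh; ring.
have uvy : u - v = y by apply/matrixP => i j; rewrite !mxE -[RHS]mul1r -hh; ring.
have uv1 : vnorm2 u + vnorm2 v = 1.
  apply: complexI; rewrite rmorphD /= -!vdotvv /u /v.
  rewrite !(vdotDl, vdotDr, vdotNl, vdotNr, vdotZl, vdotZr) /h conjC_real !vdotvv x1 y1.
  transitivity ((h + h) ^+ 2 * 1); last by rewrite hh expr1n mulr1.
  by rewrite /h; ring.
set s := be + e; set t := al + e.
have pol := block_form_polarization s t u v; rewrite uvx uvy in pol.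
have H : 0 <= s * (s + t) * complex.Re (block_form u u)
         + t * (s + t) * complex.Re (block_form v (- v))
         - s * t * complex.Re (block_form x y).
  have := Re_block_form_ge0 ((s%:C)%C *: u - (t%:C)%C *: v) ((s%:C)%C *: u + (t%:C)%C *: v).
  by rewrite -pol -!rmorphD -!rmorphM {1}ReD {1}ReN {1}ReD !Re_realM.
set r := complex.Re (vdot (T *m x) y).
have xy_form : complex.Re (block_form x y)
    = complex.Re (block_form x (- y)) + (r + r + (r + r)).
  have -> : block_form x y = block_form x (- y)
      + (vdot (T *m x) y + vdot (T *m x) y + (vdot (T *m x) y + vdot (T *m x) y)).
    by rewrite /block_form !(mulmxN, vdotNl, vdotNr); ring.
  by rewrite !ReD.
rewrite xy_form in H.
exact: (weighted_bound al0 be0 e0 (vnorm2_ge0 u) (vnorm2_ge0 v) uv1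
         (alB u) (beB v) (Re_block_form_ge0 x (- y)) H).
Qed.

Lemma opnorm_le_of_block (al be : R) :
  (forall u, complex.Re (block_form u u) <= al * vnorm2 u) ->
  (forall v, complex.Re (block_form v (- v)) <= be * vnorm2 v) ->
  0 <= al -> 0 <= be -> opnorm T <= (al + be) / 4%:R.
Proof.
move=> alB beB al0 be0; apply: opnorm_le => [|x x1]; first by rewrite divr_ge0 ?addr_ge0.
have Re_le := Re_vdot_le_of_block alB beB al0 be0.
have x1' : vnorm2 x = 1 by rewrite vnorm2E x1 expr1n.
have [Tx0|Txn0] := eqVneq (vnorm (T *m x)) 0.
  by rewrite Tx0 divr_ge0 ?addr_ge0.
have Tx_gt0 : 0 < vnorm (T *m x) by rewrite lt_def Txn0 vnorm_ge0.
pose y := (((vnorm (T *m x))^-1)%:C)%C *: (T *m x).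
have y1 : vnorm2 y = 1 by rewrite vnorm2Z vnorm2E -exprMn mulVf ?expr1n.
have := Re_le x y x1' y1.
by rewrite /y vdotZr conjC_real vdotvv vnorm2E -rmorphM /= expr2 mulKf.
Qed.

Lemma opnorm_block_bound :
  opnorm T <= (4%:R)^-1 * (opnorm (A + B + 2%:R *: realpart T)
                           + opnorm (A + B - 2%:R *: realpart T)).
Proof.
rewrite mulrC; apply: opnorm_le_of_block; rewrite ?opnorm_ge0 // => u.
  by rewrite Re_block_form_diag Re_vdot_le_opnorm.
by rewrite Re_block_form_antidiag Re_vdot_le_opnorm.
Qed.

End BlockForm.

Theorem corollary3p7 (R : realType) (n : nat) (T : 'M[R[i]]_n) (f g : R -> R)
  (fcont : {within [set t : R | 0 <= t], continuous f})
  (gcont : {within [set t : R | 0 <= t], continuous g})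
  (f_ge0 : forall t : R, 0 <= t -> 0 <= f t)
  (g_ge0 : forall t : R, 0 <= t -> 0 <= g t)
  (fg : forall t : R, 0 <= t -> f t * g t = t) :
  let M := (2%:R)^-1 *: (fcalc (fun t => f t ^+ 2) (absm T)
                         + fcalc (fun t => g t ^+ 2) (absm (adj T))) in
  opnorm T <= (2%:R)^-1 * (opnorm (M + realpart T) + opnorm (M - realpart T))
  /\
  opnorm T <= (4%:R)^-1 * (opnorm (absm T + absm (adj T) + 2%:R *: realpart T)
                           + opnorm (absm T + absm (adj T) - 2%:R *: realpart T)).
Proof.
move=> M.
have absm_adj : absm (adj T) = fcalc (@Num.sqrt R) (T *m adj T) by rewrite /absm adjK.
split; last first.
  apply: opnorm_block_bound; rewrite absm_adj.
  by apply: fcalc_mixed_schwarz => [t|t|t t0]; rewrite ?sqrtr_ge0 // -expr2 sqr_sqrtr.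
have ms : mixed_schwarz T (fcalc (fun t => f t ^+ 2) (absm T))
                          (fcalc (fun t => g t ^+ 2) (absm (adj T))).
  rewrite absm_adj /absm !fcalc_comp.
  apply: fcalc_mixed_schwarz => [t _|t _|t t0]; rewrite /= ?sqr_ge0 //.
  by rewrite -exprMn fg ?sqrtr_ge0 // sqr_sqrtr.
have := opnorm_block_bound ms.
set A := fcalc _ (absm T); set B := fcalc _ (absm (adj T)).
have halfK : (2%:R : R[i]) * (2%:R)^-1 = 1 by rewrite mulfV ?pnatr_eq0.
have -> : A + B + 2%:R *: realpart T = 2%:R *: (M + realpart T).
  by rewrite /M scalerDr scalerA halfK scale1r.
have -> : A + B - 2%:R *: realpart T = 2%:R *: (M - realpart T).
  by rewrite /M scalerDr scalerN scalerA halfK scale1r.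
have := opnorm_scale2_le (M + realpart T); have := opnorm_scale2_le (M - realpart T).
move: (opnorm T) (opnorm (M + realpart T)) (opnorm (M - realpart T))
  (opnorm (2%:R *: (M + realpart T))) (opnorm (2%:R *: (M - realpart T))).
by move=> nT nP nM nP2 nM2; lra.
Qed.
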